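(* Consider a charged particle (mass $m>0$, charge $q$) moving in an external electromagnetic field with potential $(A^0,\mathbf A)$, described with the light-like parameter $\xi=ct-z$ by the Hamiltonian $\hat H(\hat{\mathbf x},\hat{\boldsymbol\Pi};\xi)$ defined in the context. (i) In a spacetime region where $A^\mu$ is independent of $t$, $\hat H$ is constant along the solutions of the Hamilton equations. (ii) More generally, if $A^0$ and $A^z$ are independent of $t$, then along any solution the dimensionless energy gain over $[\xi_0,\xi_1]$ is $$\mathcal E:=\frac{\hat H(\xi_1)-\hat H(\xi_0)}{mc^2}=\int_{\xi_0}^{\xi_1}\frac{d\xi}{2\hat s(\xi)}\,\frac{\partial\hat v}{\partial\xi}\big[\hat{\mathbf x}(\xi),\hat{\boldsymbol\Pi}(\xi);\xi\big],\qquad \hat v:=|\hat{\mathbf u}^{\perp}|^2 .$$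
   Context: Coordinates $\mathbf x=(x,y,z)$; superscript $\perp$ denotes $(x,y)$-components. For a field $f(t,\mathbf x)$, $\hat f(\xi,\hat{\mathbf x}):=f((\xi+\hat z)/c,\hat{\mathbf x})$; along a motion, $\hat g(\xi)$ denotes the value of a dynamical variable $g$ when $ct-z=\xi$; prime denotes $d/d\xi$. The Hamiltonian is $$\hat H(\hat{\mathbf x},\hat{\boldsymbol\Pi};\xi)=mc^2\,\frac{1+\hat s^2+|\hat{\mathbf u}^{\perp}|^2}{2\hat s}+q\hat A^0(\xi,\hat{\mathbf x}),\quad \hat{\mathbf u}^{\perp}=\frac{\hat{\boldsymbol\Pi}^{\perp}-q\hat{\mathbf A}^{\perp}(\xi,\hat{\mathbf x})}{mc^2},\quad \hat s=-\frac{\hat\Pi^z+q[\hat A^0-\hat A^z](\xi,\hat{\mathbf x})}{mc^2}>0,$$ with Hamilton equations $\hat{\mathbf x}'=\partial\hat H/\partial\hat{\boldsymbol\Pi}$, $\hat{\boldsymbol\Pi}'=-\partial\hat H/\partial\hat{\mathbf x}$ (equivalent to the relativistic Lorentz-force equations of motion; $\hat H$ equals the particle energy $mc^2\gamma+qA^0$). $\partial\hat v/\partial\xi$ denotes the partial derivative of $\hat v$, viewed as a function of $(\hat{\mathbf x},\hat{\boldsymbol\Pi},\xi)$, with respect to its explicit $\xi$-dependence. *)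

From Stdlib Require Import Reals.
From Coquelicot Require Import Coquelicot.
Open Scope R_scope.

(* A scalar field on spacetime, as a function of (t, x, y, z). *)
Definition field4 := R -> R -> R -> R -> R.

Record EMPot := { A0 : field4 ; Ax : field4 ; Ay : field4 ; Az : field4 }.

Definition pd_t (f : field4) t x y z := Derive (fun s => f s x y z) t.
Definition pd_x (f : field4) t x y z := Derive (fun s => f t s y z) x.
Definition pd_y (f : field4) t x y z := Derive (fun s => f t x s z) y.
Definition pd_z (f : field4) t x y z := Derive (fun s => f t x y s) z.

Definition uncurry4 (f : field4) : R * R * R * R -> R :=
  fun p => f (fst (fst (fst p))) (snd (fst (fst p))) (snd (fst p)) (snd p).

Definition C1_field (f : field4) : Prop :=
  (forall t x y z,
      ex_derive (fun s => f s x y z) t /\ ex_derive (fun s => f t s y z) x /\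
      ex_derive (fun s => f t x s z) y /\ ex_derive (fun s => f t x y s) z) /\
  (forall p : R * R * R * R,
      continuous (uncurry4 f) p /\ continuous (uncurry4 (pd_t f)) p /\
      continuous (uncurry4 (pd_x f)) p /\ continuous (uncurry4 (pd_y f)) p /\
      continuous (uncurry4 (pd_z f)) p).

Definition hat (c : R) (f : field4) (xi x y z : R) : R := f ((xi + z) / c) x y z.

Section Ham.
Variables (m c q : R) (F : EMPot).

Definition u_x (x y z Px Py Pz xi : R) : R :=
  (Px - q * hat c (Ax F) xi x y z) / (m * c ^ 2).
Definition u_y (x y z Px Py Pz xi : R) : R :=
  (Py - q * hat c (Ay F) xi x y z) / (m * c ^ 2).
Definition s_hat (x y z Px Py Pz xi : R) : R :=
  - (Pz + q * (hat c (A0 F) xi x y z - hat c (Az F) xi x y z)) / (m * c ^ 2).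
Definition v_hat (x y z Px Py Pz xi : R) : R :=
  (u_x x y z Px Py Pz xi) ^ 2 + (u_y x y z Px Py Pz xi) ^ 2.
Definition H_hat (x y z Px Py Pz xi : R) : R :=
  m * c ^ 2 * (1 + (s_hat x y z Px Py Pz xi) ^ 2 + v_hat x y z Px Py Pz xi)
    / (2 * s_hat x y z Px Py Pz xi)
  + q * hat c (A0 F) xi x y z.

Definition dH_dx  x y z Px Py Pz xi := Derive (fun w => H_hat w y z Px Py Pz xi) x.
Definition dH_dy  x y z Px Py Pz xi := Derive (fun w => H_hat x w z Px Py Pz xi) y.
Definition dH_dz  x y z Px Py Pz xi := Derive (fun w => H_hat x y w Px Py Pz xi) z.
Definition dH_dPx x y z Px Py Pz xi := Derive (fun w => H_hat x y z w Py Pz xi) Px.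
Definition dH_dPy x y z Px Py Pz xi := Derive (fun w => H_hat x y z Px w Pz xi) Py.
Definition dH_dPz x y z Px Py Pz xi := Derive (fun w => H_hat x y z Px Py w xi) Pz.

Definition dv_dxi x y z Px Py Pz xi := Derive (fun w => v_hat x y z Px Py Pz w) xi.

Definition hamilton_solution (a b : R) (X Y Z PX PY PZ : R -> R) : Prop :=
  forall xi, a < xi < b ->
    0 < s_hat (X xi) (Y xi) (Z xi) (PX xi) (PY xi) (PZ xi) xi /\
    is_derive X xi (dH_dPx (X xi) (Y xi) (Z xi) (PX xi) (PY xi) (PZ xi) xi) /\
    is_derive Y xi (dH_dPy (X xi) (Y xi) (Z xi) (PX xi) (PY xi) (PZ xi) xi) /\
    is_derive Z xi (dH_dPz (X xi) (Y xi) (Z xi) (PX xi) (PY xi) (PZ xi) xi) /\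
    is_derive PX xi (- dH_dx (X xi) (Y xi) (Z xi) (PX xi) (PY xi) (PZ xi) xi) /\
    is_derive PY xi (- dH_dy (X xi) (Y xi) (Z xi) (PX xi) (PY xi) (PZ xi) xi) /\
    is_derive PZ xi (- dH_dz (X xi) (Y xi) (Z xi) (PX xi) (PY xi) (PZ xi) xi).

End Ham.

From Stdlib Require Import Reals Lra.
From Coquelicot Require Import Coquelicot.
Open Scope R_scope.

(* Along a solution of Hamilton's equations the total xi-derivative of H equals its explicit
   partial derivative dH/dxi, because the phase-space terms dH/dPi . x' + dH/dx . Pi' cancel.
   H depends explicitly on xi only through the potentials evaluated at t = (xi + z)/c, so
   dH/dxi is a combination of the d_t A^mu.  When d_t A^0 = d_t A^z = 0 the variable s has no
   explicit xi-dependence and dH/dxi = m c^2/(2 s) dv/dxi; since the potentials are C^1 this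
   integrand is continuous and the fundamental theorem of calculus gives (ii).  If moreover
   d_t A^x = d_t A^y = 0 then dv/dxi = 0, and (ii) reduces to (i). *)

Ltac rewrite_derive_values :=
  repeat match goal with
  | H : is_derive ?f ?w ?l |- context [Derive (fun x => ?f x) ?w] =>
      replace (Derive (fun x => f x) w) with l by (symmetry; exact (is_derive_unique _ _ _ H))
  end.

Ltac exact_is_derive_upto_value H :=
  lazymatch type of H with is_derive _ _ ?l =>
    lazymatch goal with |- is_derive _ _ ?r => replace r with l; [exact H |] end
  end.

Lemma continuous_pair {U V W : UniformSpace} (f : U -> V) (g : U -> W) (x : U) :
  continuous f x -> continuous g x -> continuous (fun y => (f y, g y)) x.
Proof.
  intros Hf Hg; apply (continuous_comp_2 f g pair x Hf Hg).
  apply (continuous_ext (fun p => p)); [now intros [] | apply continuous_id].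
Qed.

Lemma continuous_snd_comp (f : R -> R) (s x : R) :
  continuous f x -> continuous (fun p : R * R => f (snd p)) (s, x).
Proof. intros Hf; apply (continuous_comp snd f); [apply continuous_snd | exact Hf]. Qed.

Lemma continuous_field4_comp {U : UniformSpace} (g : field4) (T X Y Z : U -> R) (u : U) :
  continuous T u -> continuous X u -> continuous Y u -> continuous Z u ->
  continuous (uncurry4 g) (T u, X u, Y u, Z u) ->
  continuous (fun w => g (T w) (X w) (Y w) (Z w)) u.
Proof.
  intros HT HX HY HZ Hg.
  apply (continuous_comp (fun w => (T w, X w, Y w, Z w)) (uncurry4 g)); [|exact Hg].
  repeat apply continuous_pair; assumption.
Qed.

Lemma continuous_hat_comp {U : UniformSpace} (c : R) (g : field4) (Xi X Y Z : U -> R) (u : U) :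
  continuous Xi u -> continuous X u -> continuous Y u -> continuous Z u ->
  continuous (uncurry4 g) ((Xi u + Z u) / c, X u, Y u, Z u) ->
  continuous (fun w => hat c g (Xi w) (X w) (Y w) (Z w)) u.
Proof.
  intros HXi HX HY HZ Hg.
  apply (continuous_field4_comp g (fun w => (Xi w + Z w) / c)); auto.
  apply (continuous_mult (fun w => Xi w + Z w) (fun _ => / c)); [|apply continuous_const].
  apply (continuous_plus Xi Z); assumption.
Qed.

Lemma is_derive_continuous (f : R -> R) (x l : R) : is_derive f x l -> continuous f x.
Proof. intros H; apply (ex_derive_continuous (V := R_NormedModule)); exists l; exact H. Qed.

Lemma is_derive_sum_squares (U V : R -> R) (w dU dV : R) :
  is_derive U w dU -> is_derive V w dV ->
  is_derive (fun v => U v ^ 2 + V v ^ 2) w (2 * (U w * dU + V w * dV)).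
Proof.
  intros HU HV.
  auto_derive.
  - repeat split; eexists; eassumption.
  - rewrite_derive_values; ring.
Qed.

Lemma is_derive_comp_slot (phi : R -> R -> R) (S : R -> R) (xi dS dphi : R) :
  (forall u w, ex_derive (fun v => phi v w) u) ->
  continuous (fun p : R * R => Derive (fun v => phi v (snd p)) (fst p)) (S xi, xi) ->
  is_derive S xi dS ->
  is_derive (fun w => phi (S xi) w) xi dphi ->
  is_derive (fun w => phi (S w) w) xi (Derive (fun v => phi v xi) (S xi) * dS + dphi).
Proof.
  intros Hphi Hcont HS Hslice.
  pose proof (is_derive_filterdiff phi (S xi) xi (fun u w => Derive (fun v => phi v w) u) dphi
    (filter_forall _ (fun p => Derive_correct _ _ (Hphi (fst p) (snd p)))) Hslice Hcont) as Hdiff.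
  apply (filterdiff_ext_lin _ _ _
    (filterdiff_comp'_2 S (fun w => w) phi xi _ _
       (fun u v => plus (scal u (Derive (fun v => phi v xi) (S xi))) (scal v dphi))
       HS (filterdiff_id _) Hdiff)).
  intros y; set (D := Derive _ _); change (y * dS * D + y * dphi = y * (D * dS + dphi)); ring.
Qed.

Ltac continuous_coordinates :=
  first [ exact (continuous_fst _ _) | exact (continuous_const _ _)
        | apply continuous_snd_comp; assumption ].

Lemma is_derive_field4_comp (f : field4) (T X Y Z : R -> R) (xi dT dX dY dZ : R) :
  C1_field f ->
  is_derive T xi dT -> is_derive X xi dX -> is_derive Y xi dY -> is_derive Z xi dZ ->
  is_derive (fun w => f (T w) (X w) (Y w) (Z w)) xi
    (pd_t f (T xi) (X xi) (Y xi) (Z xi) * dT + pd_x f (T xi) (X xi) (Y xi) (Z xi) * dX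
   + pd_y f (T xi) (X xi) (Y xi) (Z xi) * dY + pd_z f (T xi) (X xi) (Y xi) (Z xi) * dZ).
Proof.
  intros [Hex Hcont] HT HX HY HZ.
  pose proof (is_derive_continuous _ _ _ HX) as CX.
  pose proof (is_derive_continuous _ _ _ HY) as CY.
  pose proof (is_derive_continuous _ _ _ HZ) as CZ.
  rewrite !Rplus_assoc.
  apply (is_derive_comp_slot (fun v w => f v (X w) (Y w) (Z w)) T xi dT).
  { intros u w; apply (Hex u (X w) (Y w) (Z w)). }
  { apply (continuous_field4_comp (pd_t f) fst (fun p => X (snd p)) (fun p => Y (snd p))
      (fun p => Z (snd p))); try continuous_coordinates.
    exact (proj1 (proj2 (Hcont _))). }
  { exact HT. }
  apply (is_derive_comp_slot (fun v w => f (T xi) v (Y w) (Z w)) X xi dX).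
  { intros u w; apply (Hex (T xi) u (Y w) (Z w)). }
  { apply (continuous_field4_comp (pd_x f) (fun _ => T xi) fst (fun p => Y (snd p))
      (fun p => Z (snd p))); try continuous_coordinates.
    exact (proj1 (proj2 (proj2 (Hcont _)))). }
  { exact HX. }
  apply (is_derive_comp_slot (fun v w => f (T xi) (X xi) v (Z w)) Y xi dY).
  { intros u w; apply (Hex (T xi) (X xi) u (Z w)). }
  { apply (continuous_field4_comp (pd_y f) (fun _ => T xi) (fun _ => X xi) fst
      (fun p => Z (snd p))); try continuous_coordinates.
    exact (proj1 (proj2 (proj2 (proj2 (Hcont _))))). }
  { exact HY. }
  rewrite Rmult_comm.
  apply (is_derive_comp (fun v => f (T xi) (X xi) (Y xi) v) Z xi); [|exact HZ].
  apply Derive_correct, (Hex (T xi) (X xi) (Y xi) (Z xi)).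
Qed.

(* The time argument (xi + z)/c moves with both xi and z, hence the weight (dxi + dz)/c. *)
Definition dhat (c : R) (f : field4) (xi x y z dxi dx dy dz : R) : R :=
  pd_t f ((xi + z) / c) x y z * ((dxi + dz) / c) + pd_x f ((xi + z) / c) x y z * dx
  + pd_y f ((xi + z) / c) x y z * dy + pd_z f ((xi + z) / c) x y z * dz.

Lemma is_derive_hat_comp (c : R) (f : field4) (Xi X Y Z : R -> R) (w dXi dX dY dZ : R) :
  C1_field f ->
  is_derive Xi w dXi -> is_derive X w dX -> is_derive Y w dY -> is_derive Z w dZ ->
  is_derive (fun v => hat c f (Xi v) (X v) (Y v) (Z v)) w
    (dhat c f (Xi w) (X w) (Y w) (Z w) dXi dX dY dZ).
Proof.
  intros Hf HXi HX HY HZ.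
  apply (is_derive_field4_comp f (fun v => (Xi v + Z v) / c)); auto.
  auto_derive.
  - repeat split; eexists; eassumption.
  - rewrite_derive_values; unfold Rdiv; ring.
Qed.

Section LightFrontHamiltonian.

Variables m c q : R.
Hypotheses (Hm : 0 < m) (Hc : 0 < c).

Definition s_of (Pz a0 az : R) : R := - (Pz + q * (a0 - az)) / (m * c ^ 2).
Definition u_of (P a : R) : R := (P - q * a) / (m * c ^ 2).

(* m c^2 gamma in light-front variables; [H_hat] is by definition
   [kinetic_energy (s_of Pz A0 Az) (u_of Px Ax) (u_of Py Ay) + q A0] at the hatted potentials. *)
Definition kinetic_energy (s ux uy : R) : R :=
  m * c ^ 2 * (1 + s ^ 2 + (ux ^ 2 + uy ^ 2)) / (2 * s).

Definition kinetic_energy_diff (s ux uy ds dux duy : R) : R :=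
  m * c ^ 2 * ((s ^ 2 - 1 - (ux ^ 2 + uy ^ 2)) / (2 * s ^ 2) * ds + (ux * dux + uy * duy) / s).

Lemma is_derive_s_of (Pz a0 az : R -> R) (w dPz da0 daz : R) :
  is_derive Pz w dPz -> is_derive a0 w da0 -> is_derive az w daz ->
  is_derive (fun v => s_of (Pz v) (a0 v) (az v)) w (s_of dPz da0 daz).
Proof.
  intros HPz Ha0 Haz; unfold s_of.
  auto_derive.
  - repeat split; eexists; eassumption.
  - rewrite_derive_values; field; split; lra.
Qed.

Lemma is_derive_u_of (P a : R -> R) (w dP da : R) :
  is_derive P w dP -> is_derive a w da ->
  is_derive (fun v => u_of (P v) (a v)) w (u_of dP da).
Proof.
  intros HP Ha; unfold u_of.
  auto_derive.
  - repeat split; eexists; eassumption.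
  - rewrite_derive_values; field; split; lra.
Qed.

Lemma is_derive_kinetic_energy (S UX UY : R -> R) (w dS dUX dUY : R) :
  is_derive S w dS -> is_derive UX w dUX -> is_derive UY w dUY -> S w <> 0 ->
  is_derive (fun v => kinetic_energy (S v) (UX v) (UY v)) w
    (kinetic_energy_diff (S w) (UX w) (UY w) dS dUX dUY).
Proof.
  intros HS HUX HUY Hs0; unfold kinetic_energy, kinetic_energy_diff.
  auto_derive.
  - repeat split; try (eexists; eassumption); lra.
  - rewrite_derive_values; field; exact Hs0.
Qed.

Lemma is_derive_energy (PX PY PZ a0 ax ay az : R -> R) (w dPX dPY dPZ da0 dax day daz : R) :
  is_derive PX w dPX -> is_derive PY w dPY -> is_derive PZ w dPZ ->
  is_derive a0 w da0 -> is_derive ax w dax -> is_derive ay w day -> is_derive az w daz ->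
  s_of (PZ w) (a0 w) (az w) <> 0 ->
  is_derive
    (fun v => kinetic_energy (s_of (PZ v) (a0 v) (az v)) (u_of (PX v) (ax v))
                (u_of (PY v) (ay v)) + q * a0 v) w
    (kinetic_energy_diff (s_of (PZ w) (a0 w) (az w)) (u_of (PX w) (ax w)) (u_of (PY w) (ay w))
       (s_of dPZ da0 daz) (u_of dPX dax) (u_of dPY day) + q * da0).
Proof.
  intros HPX HPY HPZ Ha0 Hax Hay Haz Hs0.
  apply (is_derive_plus
    (fun v => kinetic_energy (s_of (PZ v) (a0 v) (az v)) (u_of (PX v) (ax v))
                (u_of (PY v) (ay v)))
    (fun v => q * a0 v)).
  - apply (is_derive_kinetic_energy (fun v => s_of (PZ v) (a0 v) (az v))
      (fun v => u_of (PX v) (ax v)) (fun v => u_of (PY v) (ay v)));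
      auto using is_derive_s_of, is_derive_u_of.
  - apply (is_derive_scal a0 w q), Ha0.
Qed.

End LightFrontHamiltonian.

Section HamiltonFlow.

Variables (m c q : R) (F : EMPot).
Hypotheses (Hm : 0 < m) (Hc : 0 < c).
Hypotheses (HA0 : C1_field (A0 F)) (HAx : C1_field (Ax F))
  (HAy : C1_field (Ay F)) (HAz : C1_field (Az F)).

Definition H_hat_diff (x y z Px Py Pz xi dx dy dz dPx dPy dPz dxi : R) : R :=
  let da f := dhat c f xi x y z dxi dx dy dz in
  kinetic_energy_diff m c (s_hat m c q F x y z Px Py Pz xi) (u_x m c q F x y z Px Py Pz xi)
    (u_y m c q F x y z Px Py Pz xi) (s_of m c q dPz (da (A0 F)) (da (Az F)))
    (u_of m c q dPx (da (Ax F))) (u_of m c q dPy (da (Ay F))) + q * da (A0 F).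

Lemma is_derive_H_hat_comp (X Y Z PX PY PZ Xi : R -> R) (w dX dY dZ dPX dPY dPZ dXi : R) :
  is_derive X w dX -> is_derive Y w dY -> is_derive Z w dZ ->
  is_derive PX w dPX -> is_derive PY w dPY -> is_derive PZ w dPZ -> is_derive Xi w dXi ->
  s_hat m c q F (X w) (Y w) (Z w) (PX w) (PY w) (PZ w) (Xi w) <> 0 ->
  is_derive (fun v => H_hat m c q F (X v) (Y v) (Z v) (PX v) (PY v) (PZ v) (Xi v)) w
    (H_hat_diff (X w) (Y w) (Z w) (PX w) (PY w) (PZ w) (Xi w) dX dY dZ dPX dPY dPZ dXi).
Proof.
  intros HX HY HZ HPX HPY HPZ HXi Hs0.
  apply (is_derive_energy m c q Hm Hc PX PY PZ (fun v => hat c (A0 F) (Xi v) (X v) (Y v) (Z v))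
    (fun v => hat c (Ax F) (Xi v) (X v) (Y v) (Z v))
    (fun v => hat c (Ay F) (Xi v) (X v) (Y v) (Z v))
    (fun v => hat c (Az F) (Xi v) (X v) (Y v) (Z v)));
    auto using is_derive_hat_comp.
Qed.

Definition dH_dxi (x y z Px Py Pz xi : R) : R :=
  Derive (fun w => H_hat m c q F x y z Px Py Pz w) xi.

Lemma H_hat_partials (x y z Px Py Pz xi : R) :
  s_hat m c q F x y z Px Py Pz xi <> 0 ->
  let D := H_hat_diff x y z Px Py Pz xi in
  dH_dx m c q F x y z Px Py Pz xi = D 1 0 0 0 0 0 0 /\
  dH_dy m c q F x y z Px Py Pz xi = D 0 1 0 0 0 0 0 /\
  dH_dz m c q F x y z Px Py Pz xi = D 0 0 1 0 0 0 0 /\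
  dH_dPx m c q F x y z Px Py Pz xi = D 0 0 0 1 0 0 0 /\
  dH_dPy m c q F x y z Px Py Pz xi = D 0 0 0 0 1 0 0 /\
  dH_dPz m c q F x y z Px Py Pz xi = D 0 0 0 0 0 1 0 /\
  dH_dxi x y z Px Py Pz xi = D 0 0 0 0 0 0 1.
Proof.
  intros Hs0 D.
  repeat split; apply is_derive_unique, is_derive_H_hat_comp;
    auto using is_derive_id, is_derive_const.
Qed.

(* [D] is linear in its increments, so along the Hamiltonian vector field the phase-space terms
   dH/dPi . dH/dx - dH/dx . dH/dPi cancel. *)
Lemma H_hat_diff_hamilton_flow (x y z Px Py Pz xi : R) :
  let D := H_hat_diff x y z Px Py Pz xi in
  D (D 0 0 0 1 0 0 0) (D 0 0 0 0 1 0 0) (D 0 0 0 0 0 1 0)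
    (- D 1 0 0 0 0 0 0) (- D 0 1 0 0 0 0 0) (- D 0 0 1 0 0 0 0) 1 = D 0 0 0 0 0 0 1.
Proof.
  intros D; unfold D, H_hat_diff, kinetic_energy_diff, s_of, u_of, dhat; cbv zeta.
  unfold Rdiv; ring.
Qed.

Lemma is_derive_H_hat_along_solution (a b : R) (X Y Z PX PY PZ : R -> R) (xi : R) :
  hamilton_solution m c q F a b X Y Z PX PY PZ -> a < xi < b ->
  is_derive (fun w => H_hat m c q F (X w) (Y w) (Z w) (PX w) (PY w) (PZ w) w) xi
    (dH_dxi (X xi) (Y xi) (Z xi) (PX xi) (PY xi) (PZ xi) xi).
Proof.
  intros Hsol Hxi.
  destruct (Hsol xi Hxi) as (Hs & HX & HY & HZ & HPX & HPY & HPZ).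
  assert (Hs0 : s_hat m c q F (X xi) (Y xi) (Z xi) (PX xi) (PY xi) (PZ xi) xi <> 0) by lra.
  destruct (H_hat_partials _ _ _ _ _ _ _ Hs0) as (Ex & Ey & Ez & EPx & EPy & EPz & Exi).
  rewrite EPx in HX; rewrite EPy in HY; rewrite EPz in HZ.
  rewrite Ex in HPX; rewrite Ey in HPY; rewrite Ez in HPZ.
  rewrite Exi, <- H_hat_diff_hamilton_flow.
  exact (is_derive_H_hat_comp X Y Z PX PY PZ (fun w => w) xi _ _ _ _ _ _ _
    HX HY HZ HPX HPY HPZ (is_derive_id xi) Hs0).
Qed.

Lemma dv_dxi_eq (x y z Px Py Pz xi : R) :
  dv_dxi m c q F x y z Px Py Pz xi =
  - (2 * q / (m * c ^ 3)) *
    (u_x m c q F x y z Px Py Pz xi * pd_t (Ax F) ((xi + z) / c) x y z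
     + u_y m c q F x y z Px Py Pz xi * pd_t (Ay F) ((xi + z) / c) x y z).
Proof.
  apply is_derive_unique.
  pose proof (fun f Hf => is_derive_hat_comp c f (fun w => w) (fun _ => x) (fun _ => y)
    (fun _ => z) xi 1 0 0 0 Hf (is_derive_id xi) (is_derive_const x xi)
    (is_derive_const y xi) (is_derive_const z xi)) as Hhat.
  pose proof (is_derive_sum_squares _ _ xi _ _
    (is_derive_u_of m c q Hm Hc _ _ xi _ _ (is_derive_const Px xi) (Hhat _ HAx))
    (is_derive_u_of m c q Hm Hc _ _ xi _ _ (is_derive_const Py xi) (Hhat _ HAy))) as Hv.
  exact_is_derive_upto_value Hv.
  unfold u_of, u_x, u_y, dhat, zero; simpl; field; lra.
Qed.

Lemma dH_dxi_eq_dv_dxi (x y z Px Py Pz xi : R) :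
  s_hat m c q F x y z Px Py Pz xi <> 0 ->
  pd_t (A0 F) ((xi + z) / c) x y z = 0 -> pd_t (Az F) ((xi + z) / c) x y z = 0 ->
  dH_dxi x y z Px Py Pz xi =
  m * c ^ 2 / (2 * s_hat m c q F x y z Px Py Pz xi) * dv_dxi m c q F x y z Px Py Pz xi.
Proof.
  intros Hs0 Ht0 Htz.
  destruct (H_hat_partials _ _ _ _ _ _ _ Hs0) as (_ & _ & _ & _ & _ & _ & ->).
  rewrite dv_dxi_eq.
  unfold H_hat_diff, kinetic_energy_diff, s_of, u_of, dhat; cbv zeta.
  rewrite Ht0, Htz.
  field; repeat split; lra.
Qed.

Lemma continuous_energy_density_expr (S UX UY TX TY : R -> R) (k x : R) :
  continuous S x -> continuous UX x -> continuous UY x -> continuous TX x -> continuous TY x ->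
  S x <> 0 ->
  continuous (fun w => 1 / (2 * S w) * (k * (UX w * TX w + UY w * TY w))) x.
Proof.
  intros HS HUX HUY HTX HTY Hs0; unfold Rdiv.
  apply (continuous_mult (fun w => 1 * / (2 * S w)) (fun w => k * (UX w * TX w + UY w * TY w))).
  - apply (continuous_mult (fun _ => 1) (fun w => / (2 * S w))); [apply continuous_const |].
    apply continuous_Rinv_comp; [|lra].
    apply (continuous_mult (fun _ => 2) S); [apply continuous_const | exact HS].
  - apply (continuous_mult (fun _ => k) (fun w => UX w * TX w + UY w * TY w));
      [apply continuous_const |].
    apply (continuous_plus (fun w => UX w * TX w) (fun w => UY w * TY w));
      [apply (continuous_mult UX TX) | apply (continuous_mult UY TY)]; assumption.
Qed.

Lemma continuous_energy_density (a b : R) (X Y Z PX PY PZ : R -> R) (xi : R) :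
  hamilton_solution m c q F a b X Y Z PX PY PZ -> a < xi < b ->
  continuous (fun w => 1 / (2 * s_hat m c q F (X w) (Y w) (Z w) (PX w) (PY w) (PZ w) w)
                       * dv_dxi m c q F (X w) (Y w) (Z w) (PX w) (PY w) (PZ w) w) xi.
Proof.
  intros Hsol Hxi.
  destruct (Hsol xi Hxi) as (Hs & HX & HY & HZ & HPX & HPY & HPZ).
  pose proof (fun f Hf => is_derive_hat_comp c f (fun w => w) X Y Z xi 1 _ _ _ Hf
    (is_derive_id xi) HX HY HZ) as Hhat.
  assert (Hpd_t : forall f, C1_field f ->
    continuous (fun w => hat c (pd_t f) w (X w) (Y w) (Z w)) xi).
  { intros f [_ Hf].
    apply (continuous_hat_comp c (pd_t f) (fun w => w) X Y Z xi (continuous_id xi)).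
    - exact (is_derive_continuous _ _ _ HX).
    - exact (is_derive_continuous _ _ _ HY).
    - exact (is_derive_continuous _ _ _ HZ).
    - exact (proj1 (proj2 (Hf _))). }
  apply (continuous_ext (fun w =>
    1 / (2 * s_hat m c q F (X w) (Y w) (Z w) (PX w) (PY w) (PZ w) w)
    * (- (2 * q / (m * c ^ 3))
       * (u_x m c q F (X w) (Y w) (Z w) (PX w) (PY w) (PZ w) w
            * hat c (pd_t (Ax F)) w (X w) (Y w) (Z w)
          + u_y m c q F (X w) (Y w) (Z w) (PX w) (PY w) (PZ w) w
            * hat c (pd_t (Ay F)) w (X w) (Y w) (Z w))))).
  { intros w; rewrite dv_dxi_eq; reflexivity. }
  apply continuous_energy_density_expr; [| | | apply Hpd_t, HAx | apply Hpd_t, HAy | lra].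
  - exact (is_derive_continuous _ _ _
      (is_derive_s_of m c q Hm Hc _ _ _ xi _ _ _ HPZ (Hhat _ HA0) (Hhat _ HAz))).
  - exact (is_derive_continuous _ _ _
      (is_derive_u_of m c q Hm Hc _ _ xi _ _ HPX (Hhat _ HAx))).
  - exact (is_derive_continuous _ _ _
      (is_derive_u_of m c q Hm Hc _ _ xi _ _ HPY (Hhat _ HAy))).
Qed.

Lemma between_in_open_interval (a b x0 x1 x : R) :
  a < x0 < b -> a < x1 < b -> Rmin x0 x1 <= x <= Rmax x0 x1 -> a < x < b.
Proof. unfold Rmin, Rmax; destruct (Rle_dec x0 x1); lra. Qed.

Theorem energy_gain (a b : R) (X Y Z PX PY PZ : R -> R) (xi0 xi1 : R) :
  hamilton_solution m c q F a b X Y Z PX PY PZ ->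
  (forall xi, a < xi < b ->
     pd_t (A0 F) ((xi + Z xi) / c) (X xi) (Y xi) (Z xi) = 0 /\
     pd_t (Az F) ((xi + Z xi) / c) (X xi) (Y xi) (Z xi) = 0) ->
  a < xi0 < b -> a < xi1 < b ->
  (H_hat m c q F (X xi1) (Y xi1) (Z xi1) (PX xi1) (PY xi1) (PZ xi1) xi1 -
   H_hat m c q F (X xi0) (Y xi0) (Z xi0) (PX xi0) (PY xi0) (PZ xi0) xi0) / (m * c ^ 2) =
  RInt (fun xi =>
          1 / (2 * s_hat m c q F (X xi) (Y xi) (Z xi) (PX xi) (PY xi) (PZ xi) xi)
          * dv_dxi m c q F (X xi) (Y xi) (Z xi) (PX xi) (PY xi) (PZ xi) xi) xi0 xi1.
Proof.
  intros Hsol Hstat H0 H1.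
  set (E := fun w => / (m * c ^ 2) * H_hat m c q F (X w) (Y w) (Z w) (PX w) (PY w) (PZ w) w).
  rewrite (is_RInt_unique _ xi0 xi1 (minus (E xi1) (E xi0))).
  { unfold E, minus, plus, opp; simpl; field; split; lra. }
  apply (is_RInt_derive E); intros xi Hxi;
    pose proof (between_in_open_interval a b xi0 xi1 xi H0 H1 Hxi) as Hab.
  - destruct (Hsol xi Hab) as [Hs _]; destruct (Hstat xi Hab) as [Ht0 Htz].
    pose proof (is_derive_scal _ xi (/ (m * c ^ 2)) _
      (is_derive_H_hat_along_solution a b X Y Z PX PY PZ xi Hsol Hab)) as Hd.
    rewrite dH_dxi_eq_dv_dxi in Hd by lra.
    exact_is_derive_upto_value Hd.
    field; split; lra.
  - apply (continuous_energy_density a b); assumption.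
Qed.

Theorem energy_conservation (a b : R) (X Y Z PX PY PZ : R -> R) (xi0 xi1 : R) :
  hamilton_solution m c q F a b X Y Z PX PY PZ ->
  (forall xi, a < xi < b ->
     pd_t (A0 F) ((xi + Z xi) / c) (X xi) (Y xi) (Z xi) = 0 /\
     pd_t (Ax F) ((xi + Z xi) / c) (X xi) (Y xi) (Z xi) = 0 /\
     pd_t (Ay F) ((xi + Z xi) / c) (X xi) (Y xi) (Z xi) = 0 /\
     pd_t (Az F) ((xi + Z xi) / c) (X xi) (Y xi) (Z xi) = 0) ->
  a < xi0 < b -> a < xi1 < b ->
  H_hat m c q F (X xi1) (Y xi1) (Z xi1) (PX xi1) (PY xi1) (PZ xi1) xi1 =
  H_hat m c q F (X xi0) (Y xi0) (Z xi0) (PX xi0) (PY xi0) (PZ xi0) xi0.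
Proof.
  intros Hsol Hstat H0 H1.
  pose proof (energy_gain a b X Y Z PX PY PZ xi0 xi1 Hsol
    ltac:(intros xi Hxi; destruct (Hstat xi Hxi) as (E0 & _ & _ & Ez); split; assumption)
    H0 H1) as Hgain.
  rewrite (RInt_ext _ (fun _ => 0)), RInt_const in Hgain.
  - change (scal (xi1 - xi0) 0) with ((xi1 - xi0) * 0) in Hgain.
    rewrite Rmult_0_r in Hgain.
    apply Rminus_diag_uniq.
    apply (Rmult_eq_reg_r (/ (m * c ^ 2))); [rewrite Rmult_0_l; exact Hgain |].
    apply Rinv_neq_0_compat, Rgt_not_eq, Rmult_gt_0_compat; [lra | apply pow_lt; lra].
  - intros xi Hxi.
    assert (Hab : a < xi < b) by (apply (between_in_open_interval a b xi0 xi1); lra).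
    destruct (Hstat xi Hab) as (_ & Ex & Ey & _).
    rewrite dv_dxi_eq, Ex, Ey, !Rmult_0_r, Rplus_0_r, !Rmult_0_r; reflexivity.
Qed.

End HamiltonFlow.

Theorem corollary1 (m c q : R) (F : EMPot)
  (Hm : 0 < m) (Hc : 0 < c)
  (HA0 : C1_field (A0 F)) (HAx : C1_field (Ax F))
  (HAy : C1_field (Ay F)) (HAz : C1_field (Az F)) :
  (* (i) A^mu independent of t in the region D visited by the motion:
         \hat H is constant along the solution *)
  (forall (D : R -> R -> R -> R -> Prop) (a b : R) (X Y Z PX PY PZ : R -> R),
     hamilton_solution m c q F a b X Y Z PX PY PZ ->
     (forall t x y z, D t x y z ->
        pd_t (A0 F) t x y z = 0 /\ pd_t (Ax F) t x y z = 0 /\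
        pd_t (Ay F) t x y z = 0 /\ pd_t (Az F) t x y z = 0) ->
     (forall xi, a < xi < b -> D ((xi + Z xi) / c) (X xi) (Y xi) (Z xi)) ->
     forall xi0 xi1, a < xi0 < b -> a < xi1 < b ->
       H_hat m c q F (X xi1) (Y xi1) (Z xi1) (PX xi1) (PY xi1) (PZ xi1) xi1 =
       H_hat m c q F (X xi0) (Y xi0) (Z xi0) (PX xi0) (PY xi0) (PZ xi0) xi0) /\
  (* (ii) only A^0 and A^z independent of t: energy-gain formula *)
  (forall (D : R -> R -> R -> R -> Prop) (a b : R) (X Y Z PX PY PZ : R -> R),
     hamilton_solution m c q F a b X Y Z PX PY PZ ->
     (forall t x y z, D t x y z ->
        pd_t (A0 F) t x y z = 0 /\ pd_t (Az F) t x y z = 0) ->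
     (forall xi, a < xi < b -> D ((xi + Z xi) / c) (X xi) (Y xi) (Z xi)) ->
     forall xi0 xi1, a < xi0 < b -> a < xi1 < b ->
       (H_hat m c q F (X xi1) (Y xi1) (Z xi1) (PX xi1) (PY xi1) (PZ xi1) xi1 -
        H_hat m c q F (X xi0) (Y xi0) (Z xi0) (PX xi0) (PY xi0) (PZ xi0) xi0)
         / (m * c ^ 2) =
       RInt (fun xi =>
               1 / (2 * s_hat m c q F (X xi) (Y xi) (Z xi) (PX xi) (PY xi) (PZ xi) xi)
               * dv_dxi m c q F (X xi) (Y xi) (Z xi) (PX xi) (PY xi) (PZ xi) xi)
            xi0 xi1).
Proof.
  split; intros D a b X Y Z PX PY PZ Hsol HD Hpath xi0 xi1 H0 H1.
  - apply (energy_conservation m c q F Hm Hc HA0 HAx HAy HAz a b); auto.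
  - apply (energy_gain m c q F Hm Hc HA0 HAx HAy HAz a b); auto.
Qed.
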